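(* Let $A\in GL_n(\mathbb{C})$ with $M_1(A)\in(\frac12,1)$ and let $c\in(M_1(A),1)$. Then $M_1(A_m)<f^{m-1}(c)$ for every $m\geqslant1$.
   Context: For $B\in GL_N(\mathbb{C})$, $M_1(B)$ denotes $\frac1N$ times the algebraic multiplicity of $1$ as an eigenvalue of $B$. Define $A_1=A$ and $A_{m+1}=A_m\otimes A_m$ (Kronecker product), so $A_m\in GL_{n^{2^{m-1}}}(\mathbb{C})$. Let $f:[\frac12,1]\to[\frac12,1]$, $f(x)=x^2+(1-x)^2$, and $f^{m}$ its $m$-fold iterate ($f^0=\mathrm{id}$). *)

From HB Require Import structures.
From mathcomp Require Import all_boot all_order all_algebra.
Set Implicit Arguments. Unset Strict Implicit. Unset Printing Implicit Defensive.
Import Order.TTheory GRing.Theory Num.Theory.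
Local Open Scope ring_scope.

Lemma kron_pos (m n : nat) (i : 'I_(m * n)) : (0 < n)%N.
Proof. case: n i => [|n] [i] //=; by rewrite muln0. Qed.

Lemma kron_divP (m n : nat) (i : 'I_(m * n)) : (i %/ n < m)%N.
Proof. by rewrite ltn_divLR ?(kron_pos i) // ltn_ord. Qed.

Lemma kron_modP (m n : nat) (i : 'I_(m * n)) : (i %% n < n)%N.
Proof. by rewrite ltn_pmod // (kron_pos i). Qed.

Definition kron_hi (m n : nat) (i : 'I_(m * n)) : 'I_m := Ordinal (kron_divP i).
Definition kron_lo (m n : nat) (i : 'I_(m * n)) : 'I_n := Ordinal (kron_modP i).

(* Kronecker product: (A (x) B)_{(i1,i2),(j1,j2)} = A i1 j1 * B i2 j2,
   with row index i1 * n2 + i2 (standard convention). *)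
Definition kron (R : pzRingType) (m1 n1 m2 n2 : nat)
  (A : 'M[R]_(m1, n1)) (B : 'M[R]_(m2, n2)) : 'M[R]_(m1 * m2, n1 * n2) :=
  \matrix_(i, j) (A (kron_hi i) (kron_hi j) * B (kron_lo i) (kron_lo j)).

Fixpoint kdim (n k : nat) : nat :=
  match k with 0 => n | k'.+1 => (kdim n k' * kdim n k')%N end.

(* kpow A k = A_{k+1} in the paper's notation: A_1 = A, A_{m+1} = A_m (x) A_m. *)
Fixpoint kpow (R : pzRingType) (n : nat) (A : 'M[R]_n) (k : nat) : 'M[R]_(kdim n k) :=
  match k with
  | 0 => A
  | k'.+1 => kron (kpow A k') (kpow A k')
  end.

Definition M1 (R : numClosedFieldType) (N : nat) (B : 'M[R]_N) : R :=
  (mup 1 (char_poly B))%:R / N%:R.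

Definition fmap (R : numClosedFieldType) (x : R) : R := x ^+ 2 + (1 - x) ^+ 2.

From HB Require Import structures.
From mathcomp Require Import all_boot all_order all_algebra.
From mathcomp Require Import mxtens spectral ring.
Import Order.TTheory GRing.Theory Num.Theory.
Local Open Scope ring_scope.
Set Implicit Arguments. Unset Strict Implicit. Unset Printing Implicit Defensive.

(* By Schur, an invertible A is similar to an upper triangular T
   with nonzero diagonal, and A_{k+1} = kpow A k is then similar to the
   triangular kpow T k, whose diagonal consists of products of diagonal
   entries of T.  Hence M_1(A_{k+1}) is the proportion of ones on that
   diagonal.  Call a family of N values x-balanced when 1 occurs at
   most x N times and every other value at most (1 - x) N times.  The key
   combinatorial step: if d is x-balanced, nonzero, and x lies in [1/2, 1], the family
   of all products d i * d j is f(x)-balanced.  Starting from x = M_1(A), the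
   diagonal of kpow T k is f^k(M_1(A))-balanced, so M_1(A_{k+1}) <= f^k(M_1 A),
   and f^k(M_1 A) < f^k(c) because f is increasing on [1/2, 1]. *)

(* The Kronecker product is the tensor product [tensmx] of the
   real-closed library, so its multiplicativity can be imported from there. *)
Lemma kron_tensmx (R : pzRingType) m1 n1 m2 n2
  (A : 'M[R]_(m1, n1)) (B : 'M[R]_(m2, n2)) : kron A B = A *t B.
Proof. by apply/matrixP => i j; rewrite !mxE; congr (A _ _ * B _ _); apply: val_inj. Qed.

Lemma kron_mulmx (R : comPzRingType) m n p q r s (A : 'M[R]_(m, n))
  (B : 'M[R]_(p, q)) (C : 'M[R]_(n, r)) (D : 'M[R]_(q, s)) :
  kron A B *m kron C D = kron (A *m C) (B *m D).
Proof. by rewrite !kron_tensmx tensmx_mul. Qed.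

Lemma kron_index m n (i : 'I_(m * n)) : i = (kron_hi i * n + kron_lo i)%N :> nat.
Proof. exact: divn_eq. Qed.

Lemma kron1mx (R : pzRingType) m n : kron (1%:M : 'M[R]_m) (1%:M : 'M[R]_n) = 1%:M.
Proof.
apply/matrixP => i j; rewrite !mxE -natrM mulnb; congr (nat_of_bool _)%:R.
apply/andP/eqP => [[/eqP hi_eq /eqP lo_eq]|->]; last by [].
by apply: val_inj; rewrite /= (kron_index i) (kron_index j) hi_eq lo_eq.
Qed.

(* The Kronecker product of upper triangular matrices is upper triangular:
   the row order is lexicographic in (hi, lo). *)
Lemma kron_trig (R : pzRingType) m n (A : 'M[R]_m) (B : 'M[R]_n) :
  is_trig_mx A -> is_trig_mx B -> is_trig_mx (kron A B).
Proof.
move=> /is_trig_mxP trigA /is_trig_mxP trigB; apply/is_trig_mxP => i j lt_ij.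
rewrite mxE; have hi_le : (kron_hi i <= kron_hi j)%N.
  by rewrite /= leq_div2r // ltnW.
case: ltngtP hi_le => // [hi_lt|hi_eq] _; first by rewrite trigA ?mul0r.
rewrite trigB ?mulr0 //.
by move: lt_ij; rewrite (kron_index i) (kron_index j) hi_eq ltn_add2l.
Qed.

Lemma kpow_mulmx (R : comPzRingType) n (A B : 'M[R]_n) k :
  kpow (A *m B) k = kpow A k *m kpow B k.
Proof. by elim: k => //= k ->; rewrite kron_mulmx. Qed.

Lemma kpow1mx (R : comPzRingType) n k : kpow (1%:M : 'M[R]_n) k = 1%:M.
Proof. by elim: k => //= k ->; rewrite kron1mx. Qed.

Lemma kpow_trig (R : pzRingType) n (A : 'M[R]_n) k :
  is_trig_mx A -> is_trig_mx (kpow A k).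
Proof. by move=> trigA; elim: k => //= k IHk; apply: kron_trig. Qed.

Lemma kdim_gt0 n k : (0 < n)%N -> (0 < kdim n k)%N.
Proof. by move=> n_gt0; elim: k => //= k IHk; rewrite muln_gt0 IHk. Qed.

Fixpoint kdiag (R : pzRingType) n (T : 'M[R]_n) k : 'I_(kdim n k) -> R :=
  match k return 'I_(kdim n k) -> R with
  | 0 => fun i => T i i
  | k'.+1 => fun i => @kdiag R n T k' (kron_hi i) * @kdiag R n T k' (kron_lo i)
  end.
Arguments kdiag {R n} T k i.

Lemma kpow_diag (R : pzRingType) n (T : 'M[R]_n) k i : kpow T k i i = kdiag T k i.
Proof. by elim: k i => //= k IHk i; rewrite mxE !IHk. Qed.

Lemma kdiag_neq0 (R : idomainType) n (T : 'M[R]_n) k :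
  (forall i, T i i != 0) -> forall i, kdiag T k i != 0.
Proof. by move=> T_neq0; elim: k => //= k IHk i; rewrite mulf_neq0. Qed.

Lemma char_poly_conj (R : comNzRingType) N (U V B : 'M[R]_N) :
  U *m V = 1%:M -> V *m U = 1%:M -> char_poly (U *m B *m V) = char_poly B.
Proof.
move=> UV VU; set pU := map_mx polyC U; set pV := map_mx polyC V.
have pUV : pU *m pV = 1%:M by rewrite -map_mxM UV map_mx1.
have pVU : pV *m pU = 1%:M by rewrite -map_mxM VU map_mx1.
have conj_mx : char_poly_mx (U *m B *m V) = pU *m char_poly_mx B *m pV.
  rewrite /char_poly_mx mulmxBr mulmxBl !map_mxM.
  by rewrite mul_mx_scalar -scalemxAl -mul_scalar_mx pUV mulmx1.
by rewrite /char_poly conj_mx !det_mulmx mulrC mulrA -det_mulmx pVU det1 mul1r.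
Qed.

Definition occ (R : pzRingType) N (d : 'I_N -> R) (g : R) : R :=
  \sum_i (d i == g)%:R.

Lemma M1_trig (R : numClosedFieldType) N (T : 'M[R]_N) :
  is_trig_mx T -> M1 T = occ (fun i => T i i) 1 / N%:R.
Proof.
move=> trigT; rewrite /M1 char_poly_trig //.
rewrite -(big_map (fun i => T i i) xpredT (fun y => 'X - y%:P)).
rewrite mu_prod_XsubC count_map /occ -sum1_count natr_sum big_mkcond /=.
by congr (_ / _); apply: eq_bigr => i _; rewrite eq_sym; case: (_ == _).
Qed.

(* Schur triangularization of an invertible A = P^-1 T P transports to every
   Kronecker power, so M_1(A_{k+1}) counts the ones among the products of
   2^k diagonal entries of T, all of which are nonzero. *)
Lemma M1_kpow_trig (R : numClosedFieldType) n (A : 'M[R]_n) :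
  (0 < n)%N -> A \in unitmx ->
  exists2 T : 'M[R]_n, forall i, T i i != 0 &
    forall k, M1 (kpow A k) = occ (kdiag T k) 1 / (kdim n k)%:R.
Proof.
move=> n_gt0 unitA; have [P /unitarymx_unit unitP] := Schur A n_gt0.
rewrite /similar_to /conjmx pinvmxE //; set T := P *m A *m invmx P => trigT.
have unitT : T \in unitmx by rewrite !unitmx_mul unitA unitP unitmx_inv unitP.
exists T.
  by move: unitT; rewrite unitmxE unitfE det_trig // => /prodf_neq0 diag_neq0 i; apply: diag_neq0.
have defA : A = invmx P *m T *m P.
  by rewrite /T !mulmxA mulVmx // mul1mx -mulmxA mulVmx // mulmx1.
clearbody T.
move=> k; have VP : kpow (invmx P) k *m kpow P k = 1%:M.
  by rewrite -kpow_mulmx mulVmx // kpow1mx.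
have PV : kpow P k *m kpow (invmx P) k = 1%:M.
  by rewrite -kpow_mulmx mulmxV // kpow1mx.
rewrite defA !kpow_mulmx /M1 char_poly_conj // -/(M1 _) M1_trig; last exact: kpow_trig.
by congr (_ / _); apply: eq_bigr => i _; rewrite kpow_diag.
Qed.

Lemma kron_hi_index m n (p : 'I_m * 'I_n) : kron_hi (mxtens_index p) = p.1.
Proof. by rewrite -[in RHS](mxtens_indexK p); apply: val_inj. Qed.

Lemma kron_lo_index m n (p : 'I_m * 'I_n) : kron_lo (mxtens_index p) = p.2.
Proof. by rewrite -[in RHS](mxtens_indexK p); apply: val_inj. Qed.

Section Occurrences.
Variables (R : numFieldType) (N : nat).
Implicit Types (d : 'I_N -> R) (g : R).

Lemma occ_ge0 d g : 0 <= occ d g.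
Proof. by apply: sumr_ge0 => i _; apply: ler0n. Qed.

Lemma occ_le_compl d g : g != 1 -> occ d g <= N%:R - occ d 1.
Proof.
move=> g_neq1; rewrite lerBrDr /occ -big_split /=.
rewrite -[N in N%:R]card_ord -sumr_const; apply: ler_sum => i _.
case: (eqVneq (d i) g) => [->|_]; first by rewrite (negbTE g_neq1) addr0.
by rewrite add0r lern1 leq_b1.
Qed.

(* The family of pairwise products, indexed like a Kronecker product; the
   diagonal of [kpow T k.+1] is [sqfam] of the diagonal of [kpow T k]. *)
Definition sqfam d : 'I_(N * N) -> R := fun y => d (kron_hi y) * d (kron_lo y).

(* Counting the pairs (i, j) with d i * d j = g row by row. *)
Lemma occ_sqfam d g : (forall i, d i != 0) ->
  occ (sqfam d) g = \sum_(i < N) occ d (g / d i).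
Proof.
move=> d_neq0; rewrite /occ /sqfam pair_big /= (reindex (@mxtens_index N N)) /=.
  apply: eq_bigr => -[i j] _ /=.
  rewrite kron_hi_index kron_lo_index; congr (nat_of_bool _)%:R.
  by apply/eqP/eqP => [<-|->]; rewrite [d i * _]mulrC (mulfK, divfK).
by exists (@mxtens_unindex N N) => y _; rewrite (mxtens_indexK, mxtens_unindexK).
Qed.

End Occurrences.

Section QuadraticMap.
Variable R : numClosedFieldType.
Implicit Types x y t u N : R.

Lemma twice_ge1 x : 1 / 2 <= x -> 1 <= 2 * x.
Proof.
move=> x_ge; rewrite -subr_ge0; have -> : 2 * x - 1 = 2 * (x - 1 / 2) by field.
by rewrite mulr_ge0 // subr_ge0.
Qed.

Lemma fmap_range x : 1 / 2 <= x <= 1 -> 1 / 2 <= fmap x <= 1.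
Proof.
case/andP => x_ge x_le1; have x_ge0 : 0 <= x by apply: le_trans x_ge; rewrite divr_ge0.
apply/andP; split; rewrite -subr_ge0.
  have -> : fmap x - 1 / 2 = 2 * ((x - 1 / 2) * (x - 1 / 2)) by rewrite /fmap; field.
  by rewrite mulr_ge0 // mulr_ge0 // subr_ge0.
have -> : 1 - fmap x = 2 * (x * (1 - x)) by rewrite /fmap; ring.
by rewrite mulr_ge0 // mulr_ge0 // subr_ge0.
Qed.

Lemma fmap_lt x y : 1 / 2 <= x -> x < y -> fmap x < fmap y.
Proof.
move=> x_ge x_lt_y; rewrite -subr_gt0.
have -> : fmap y - fmap x = 2 * ((y - x) * ((x - 1 / 2) + (y - 1 / 2))).
  by rewrite /fmap; field.
rewrite mulr_gt0 // mulr_gt0 ?subr_gt0 // ltr_wpDl ?subr_ge0 // subr_gt0.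
exact: le_lt_trans x_lt_y.
Qed.

Lemma iter_fmap_range k x : 1 / 2 <= x <= 1 -> 1 / 2 <= iter k (@fmap R) x <= 1.
Proof. by move=> x_in; elim: k => //= k; apply: fmap_range. Qed.

Lemma iter_fmap_lt k x y : 1 / 2 <= x <= 1 -> x < y ->
  iter k (@fmap R) x < iter k (@fmap R) y.
Proof.
move=> x_in x_lt_y; elim: k => //= k IHk; apply: fmap_lt IHk.
by case/andP: (iter_fmap_range k x_in).
Qed.

(* Bound on the ones among the pairwise products: each index i with d i = 1
   contributes t ones, every other index at most u = (1 - x) N. *)
Lemma square_one_bound x t N : 1 / 2 <= x -> 0 <= N -> 0 <= t <= x * N ->
  N * ((1 - x) * N) + t * (t - (1 - x) * N) <= fmap x * (N * N).
Proof.
move=> x_ge N_ge0 /andP[t_ge0 t_le]; set u := (1 - x) * N; rewrite -subr_ge0.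
have -> : fmap x * (N * N) - (N * u + t * (t - u))
  = (x * N - t) * ((2 * x - 1) * N + t) by rewrite /u /fmap; ring.
by rewrite mulr_ge0 ?subr_ge0 // addr_ge0 // mulr_ge0 // subr_ge0 twice_ge1.
Qed.

(* Bound on the occurrences of a value g != 1 among the pairwise products:
   indices with d i = 1 contribute c = occ d g, those with d i = g
   contribute t = occ d 1, the others at most u. *)
Lemma square_other_bound x t c N : 1 / 2 <= x <= 1 -> 0 <= N ->
  0 <= t <= x * N -> 0 <= c <= (1 - x) * N ->
  N * ((1 - x) * N) + t * (c - (1 - x) * N) + c * (t - (1 - x) * N)
    <= (1 - fmap x) * (N * N).
Proof.
move=> /andP[x_ge x_le1] N_ge0 /andP[t_ge0 t_le] /andP[c_ge0 c_le].
set u := (1 - x) * N.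
have u_ge0 : 0 <= u by rewrite mulr_ge0 // subr_ge0.
rewrite -subr_ge0; have [t_le_u|u_le_t] := real_leP (ger0_real t_ge0) (ger0_real u_ge0).
  have -> : (1 - fmap x) * (N * N) - (N * u + t * (c - u) + c * (t - u))
    = u * ((2 * x - 1) * N) + t * (u - c) + c * (u - t) by rewrite /u /fmap; ring.
  by rewrite !addr_ge0 ?mulr_ge0 ?subr_ge0 // twice_ge1.
have -> : (1 - fmap x) * (N * N) - (N * u + t * (c - u) + c * (t - u))
  = u * (x * N - t) + t * (u - c) + (u - c) * (t - u) by rewrite /u /fmap; ring.
by rewrite !addr_ge0 ?mulr_ge0 ?subr_ge0 // ltW.
Qed.

End QuadraticMap.

Definition balanced (R : numClosedFieldType) N (x : R) (d : 'I_N -> R) : Prop :=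
  occ d 1 <= x * N%:R /\ forall g, g != 1 -> occ d g <= (1 - x) * N%:R.

Section Balanced.
Variables (R : numClosedFieldType) (N : nat).
Implicit Types (d : 'I_N -> R) (x : R).

Lemma balanced_freq d : (0 < N)%N -> balanced (occ d 1 / N%:R) d.
Proof.
move=> N_gt0; have N_neq0 : N%:R != 0 :> R by rewrite pnatr_eq0 -lt0n.
split=> [|g /occ_le_compl]; first by rewrite divfK.
by rewrite mulrBl mul1r divfK.
Qed.

Lemma occ_sqfam_one d x : (forall i, d i != 0) -> 1 / 2 <= x ->
  balanced x d -> occ (sqfam d) 1 <= fmap x * (N * N)%:R.
Proof.
move=> d_neq0 x_ge [one_le other_le].
set t := occ d 1; set u := (1 - x) * N%:R.
rewrite occ_sqfam //; apply: le_trans (_ : \sum_(i < N) (u + (d i == 1)%:R * (t - u)) <= _).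
  apply: ler_sum => i _; case: (eqVneq (d i) 1) => [->|d_neq1].
    by rewrite div1r invr1 mul1r addrC subrK.
  by rewrite mul0r addr0 other_le // div1r invr_eq1.
rewrite big_split /= sumr_const card_ord -mulr_suml -/(occ d 1) -/t natrM.
by rewrite -[u *+ N]mulr_natl square_one_bound ?ler0n ?occ_ge0.
Qed.

Lemma occ_sqfam_other d x g : (forall i, d i != 0) -> 1 / 2 <= x <= 1 ->
  balanced x d -> g != 1 -> occ (sqfam d) g <= (1 - fmap x) * (N * N)%:R.
Proof.
move=> d_neq0 x_in [one_le other_le] g_neq1.
set t := occ d 1; set u := (1 - x) * N%:R; set c := occ d g.
rewrite occ_sqfam //; apply: le_trans (_ : \sum_(i < N)
  (u + (d i == 1)%:R * (c - u) + (d i == g)%:R * (t - u)) <= _).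
  apply: ler_sum => i _; case: (eqVneq (d i) 1) => [->|d_neq1].
    by rewrite eq_sym (negbTE g_neq1) divr1 mul1r mul0r addr0 addrC subrK.
  case: (eqVneq (d i) g) => [<-|d_neq_g].
    by rewrite divff // mul0r addr0 mul1r addrC subrK.
  rewrite !mul0r !addr0 other_le //; apply: contra d_neq_g => /eqP g_eq.
  by rewrite -[d i]mul1r -g_eq divfK.
rewrite !big_split /= sumr_const card_ord -!mulr_suml -/(occ d 1) -/(occ d g) -/t -/c.
by rewrite natrM -[u *+ N]mulr_natl square_other_bound ?ler0n ?occ_ge0 ?other_le.
Qed.

Lemma balanced_sqfam d x : (forall i, d i != 0) -> 1 / 2 <= x <= 1 ->
  balanced x d -> balanced (fmap x) (sqfam d).
Proof.
move=> d_neq0 x_in bal_d; split=> [|g]; last exact: occ_sqfam_other.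
by apply: occ_sqfam_one; case/andP: x_in.
Qed.

End Balanced.

Lemma kdiag_balanced (R : numClosedFieldType) n (T : 'M[R]_n) x k :
  (forall i, T i i != 0) -> 1 / 2 <= x <= 1 -> balanced x (kdiag T 0) ->
  balanced (iter k (@fmap R) x) (kdiag T k).
Proof.
move=> T_neq0 x_in bal0; elim: k => //= k IHk.
by apply: balanced_sqfam IHk; [apply: kdiag_neq0 | apply: iter_fmap_range].
Qed.

(* M_1 of an empty matrix is 0, so M_1(A) > 0 forces a positive dimension. *)
Lemma M1_gt0_dim (R : numClosedFieldType) n (A : 'M[R]_n) : 0 < M1 A -> (0 < n)%N.
Proof. by case: n A => // A; rewrite /M1 invr0 mulr0 ltxx. Qed.

Unset Implicit Arguments.

Theorem mainTheorem12 (R : numClosedFieldType) (n : nat) (A : 'M[R]_n)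
  (hA : A \in unitmx)
  (hM : 1 / 2 < M1 A /\ M1 A < 1)
  (c : R) (hc : M1 A < c /\ c < 1) :
  forall m : nat, (1 <= m)%N -> M1 (kpow A m.-1) < iter m.-1 (@fmap R) c.
Proof.
move=> m _; case: hM => half_lt_p p_lt1; case: hc => p_lt_c _.
have p_in : 1 / 2 <= M1 A <= 1 by rewrite !ltW.
have n_gt0 : (0 < n)%N.
  by apply: M1_gt0_dim; apply: le_lt_trans half_lt_p; rewrite divr_ge0.
have [T T_neq0 M1_kpowT] := M1_kpow_trig n_gt0 hA.
have bal0 : balanced (M1 A) (kdiag T 0) by rewrite (M1_kpowT 0); exact: balanced_freq.
have [ones_le _] := kdiag_balanced m.-1 T_neq0 p_in bal0.
apply: le_lt_trans (iter_fmap_lt m.-1 p_in p_lt_c).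
by rewrite M1_kpowT ler_pdivrMr // ltr0n kdim_gt0.
Qed.
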